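(* Let $\hat{\mathcal D}=(\mathcal D,\omega,\theta)$ be a marked DAG over $X$ and $\tilde{\mathcal D}=(\mathcal D',\omega',\theta')$ its compression as defined below. Then $\Delta_I(\tilde{\mathcal D})\le\Delta_I(\hat{\mathcal D})$.
   Context: A DAG over a finite set $X$ is a finite directed acyclic graph $\mathcal D=(V,A)$ with $X\subseteq V$, a single source $r$, and whose set of sinks is exactly $X$; $\mathcal P_{\mathcal D}$ is the set of directed paths from $r$ to a sink. A marked DAG is $(\mathcal D,\omega,\theta)$ with $\omega\in\mathbb R_{>0}^A$, $\omega_{uv}>\omega_{vw}$ whenever $uv,vw\in A$, and $\theta\in\mathbb R_{>0}^A$ with $\sum_{v:uv\in A}\theta_{uv}=1$ for $u\in V\setminus X$. For a path $\gamma$, $\theta(\gamma):=\prod_{uv\in\gamma}\theta_{uv}$, and the information depth is $\Delta_I:=\max_{\gamma\in\mathcal P_{\mathcal D}}\log(1/\theta(\gamma))$. For $u\in V$, $\sigma(u)$ is the number of directed paths in $\mathcal D$ from $u$ to a point of $X$. An arc $uv$ is heavy if $v\notin X$ and $\sigma(v)>\sigma(u)/2$, light otherwise. A path $\langle u_1u_2,\dots,u_{m-1}u_m\rangle$ is heavy-light if its arcs are heavy except the last, which is light. The compression $\tilde{\mathcal D}=(\mathcal D',\omega',\theta')$, $\mathcal D'=(V,A')$, has an arc $u_1u_m\in A'$ iff there is a heavy-light path $\langle u_1u_2,\dots,u_{m-1}u_m\rangle$ in $\mathcal D$ (which is then unique), with $\omega'_{u_1u_m}:=\omega_{u_{m-1}u_m}$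 and $\theta'_{u_1u_m}:=\prod_{i=1}^{m-1}\theta_{u_iu_{i+1}}$. *)

From HB Require Import structures.
From mathcomp Require Import all_boot all_order all_algebra.
From mathcomp Require Import reals exp.
Set Implicit Arguments. Unset Strict Implicit. Unset Printing Implicit Defensive.
Import Order.TTheory GRing.Theory Num.Theory.
Local Open Scope ring_scope.

Fixpoint all_seqs (V : finType) (n : nat) : seq (seq V) :=
  if n is n'.+1 then [::] :: [seq x :: s | x <- enum V, s <- all_seqs V n']
  else [:: [::]].

(* A directed path starting at u is encoded by the list s of the vertices
   following u: the path is u :: s, its arcs are zip (u :: s) s. *)

Definition is_sink (V : finType) (A : rel V) (v : V) : bool := [forall w, ~~ A v w].

Definition acyclic (V : finType) (A : rel V) : Prop :=
  forall u s, path A u s -> last u s = u -> s = [::].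

Definition dag_over (V : finType) (A : rel V) (X : {set V}) (r : V) : Prop :=
  [/\ acyclic A,
      (forall v, (forall u, ~~ A u v) <-> v = r) &
      (forall v, is_sink A v <-> v \in X)].

Definition marked (R : realType) (V : finType) (A : rel V) (X : {set V})
    (omega theta : V -> V -> R) : Prop :=
  [/\ forall u v, A u v -> 0 < omega u v,
      forall u v w, A u v -> A v w -> omega v w < omega u v,
      forall u v, A u v -> 0 < theta u v &
      forall u, u \notin X -> \sum_(v | A u v) theta u v = 1].

Definition path_weight (R : realType) (V : finType) (theta : V -> V -> R)
    (u : V) (s : seq V) : R :=
  \prod_(e <- zip (u :: s) s) theta e.1 e.2.

(* directed paths from r to a sink of (V, A); in an acyclic graph every path
   has at most #|V| - 1 arcs, so all of them are enumerated. *)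
Definition root_sink_paths (V : finType) (A : rel V) (r : V) : seq (seq V) :=
  [seq s <- all_seqs V #|V| | path A r s && is_sink A (last r s)].

(* information depth: max over root-to-sink paths of log(1/theta(gamma)).
   (all these values are >= 0 for the graphs considered, so the seed 0 of
   the max is harmless) *)
Definition info_depth (R : realType) (V : finType) (A : rel V)
    (theta : V -> V -> R) (r : V) : R :=
  \big[Num.max/0]_(s <- root_sink_paths A r) ln ((path_weight theta r s)^-1).

Definition sigma (V : finType) (A : rel V) (X : {set V}) (u : V) : nat :=
  count (fun s => path A u s && (last u s \in X)) (all_seqs V #|V|).

Definition heavy (V : finType) (A : rel V) (X : {set V}) (u v : V) : bool :=
  (v \notin X) && (sigma A X u < 2 * sigma A X v)%N.

Definition hl_path (V : finType) (A : rel V) (X : {set V}) (u : V) (s : seq V)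
    : bool :=
  let t := take (size s).-1 s in
  [&& s != [::], path A u s, path (heavy A X) u t
    & ~~ heavy A X (last u t) (last u s)].

Definition hl_paths (V : finType) (A : rel V) (X : {set V}) (u w : V)
    : seq (seq V) :=
  [seq s <- all_seqs V #|V| | hl_path A X u s && (last u s == w)].

Definition comp_arc (V : finType) (A : rel V) (X : {set V}) : rel V :=
  fun u w => hl_paths A X u w != [::].

Definition comp_omega (R : realType) (V : finType) (A : rel V) (X : {set V})
    (omega : V -> V -> R) (u w : V) : R :=
  if hl_paths A X u w is s :: _ then
    omega (last u (take (size s).-1 s)) (last u s) else 0.

Definition comp_theta (R : realType) (V : finType) (A : rel V) (X : {set V})
    (theta : V -> V -> R) (u w : V) : R :=
  if hl_paths A X u w is s :: _ then path_weight theta u s else 0.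

From HB Require Import structures.
From mathcomp Require Import all_boot all_order all_algebra.
From mathcomp Require Import reals exp.
Set Implicit Arguments. Unset Strict Implicit. Unset Printing Implicit Defensive.
Import Order.TTheory GRing.Theory Num.Theory.
Local Open Scope ring_scope.

(* Every arc of the compression stands for a heavy-light path of the DAG with
   the same endpoints and, by definition, the same theta-weight.  Replacing
   each arc of a root-to-sink path of the compression by its heavy-light path
   therefore yields a root-to-sink path of the DAG with the same weight, so
   every value maximised in the compression is also maximised in the DAG.
   The only real work is to see that sinks of the compression are sinks of
   the DAG: from a vertex outside X, following heavy arcs must stop (the
   graph is acyclic) at a vertex that is not a sink, and an arc leaving it
   that is not heavy closes a heavy-light path. *)

Lemma mem_all_seqs (V : finType) n (s : seq V) :
  (size s <= n)%N -> s \in all_seqs V n.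
Proof.
elim: n s => [|n IHn] [|x s] //= size_s.
rewrite in_cons; apply/orP; right.
by apply: (allpairs_f_dep (fun x s => x :: s)); rewrite ?mem_enum ?IHn.
Qed.

Section AcyclicPaths.
Variables (V : finType) (A : rel V).
Hypothesis A_acyclic : acyclic A.

Lemma acyclic_path_uniq u s : path A u s -> uniq (u :: s).
Proof.
elim: s u => [|x s IHs] u //= /andP[Aux xs_path].
have /= /andP[x_notin_s uniq_s] := IHs x xs_path; rewrite x_notin_s uniq_s !andbT.
apply/negP => u_in_xs.
have : path A u (x :: s) by rewrite /= Aux.
case/splitPr: u_in_xs => p1 p2.
rewrite cat_path /= => /and3P[p1_path Alast _].
have cycle_path : path A u (rcons p1 u) by rewrite rcons_path p1_path.
have := A_acyclic cycle_path; rewrite last_rcons => /(_ erefl).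
by case: p1 {p1_path Alast cycle_path}.
Qed.

Lemma acyclic_path_size u s : path A u s -> (size s < #|V|)%N.
Proof.
move=> /acyclic_path_uniq /card_uniqP card_us.
by have := max_card (mem (u :: s)); rewrite card_us.
Qed.

Lemma acyclic_path_all_seqs u s : path A u s -> s \in all_seqs V #|V|.
Proof. by move/acyclic_path_size/ltnW/mem_all_seqs. Qed.

End AcyclicPaths.

Section PathWeight.
Variables (R : realType) (V : finType) (theta : V -> V -> R).

Lemma path_weight_nil u : path_weight theta u [::] = 1.
Proof. by rewrite /path_weight big_nil. Qed.

Lemma path_weight_cons u x s :
  path_weight theta u (x :: s) = theta u x * path_weight theta x s.
Proof. by rewrite /path_weight /= big_cons. Qed.

Lemma path_weight_cat u p q :
  path_weight theta u (p ++ q) =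
  path_weight theta u p * path_weight theta (last u p) q.
Proof.
elim: p u => [|x p IHp] u /=; first by rewrite path_weight_nil mul1r.
by rewrite !path_weight_cons IHp mulrA.
Qed.

Lemma info_depth_ge (A : rel V) r s : s \in root_sink_paths A r ->
  ln (path_weight theta r s)^-1 <= info_depth A theta r.
Proof.
move=> s_root_sink; rewrite /info_depth.
exact: (@le_bigmax_seq _ R _ _ 0 _ xpredT (fun s => ln (path_weight theta r s)^-1) s_root_sink).
Qed.

End PathWeight.

Section Compression.
Variables (V : finType) (A : rel V) (X : {set V}).
Hypothesis A_acyclic : acyclic A.
Hypothesis sinkE : forall v, is_sink A v <-> v \in X.

Lemma heavy_path_extends_to_hl_path w t :
  path A w t -> path (heavy A X) w t -> last w t \notin X ->
  exists s, hl_path A X w s.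
Proof.
move: {2}(#|V| - size t)%N (leqnn (#|V| - size t)) => n.
elim: n t => [|n IHn] t size_t At heavy_t last_notin_X.
  by move: size_t; rewrite leqn0 subn_eq0 leqNgt (acyclic_path_size A_acyclic At).
have : ~~ is_sink A (last w t) by apply: contra last_notin_X => /sinkE.
case/forallPn => v /negPn Alast_v.
have At_v : path A w (rcons t v) by rewrite rcons_path At.
case heavy_v: (heavy A X (last w t) v).
  apply: (IHn (rcons t v)) => //; last by rewrite last_rcons; case/andP: heavy_v.
  - by rewrite size_rcons subnS; case: (#|V| - size t)%N size_t.
  - by rewrite rcons_path heavy_t.
exists (rcons t v).
rewrite /hl_path size_rcons /= -cats1 take_size_cat // cats1 At_v heavy_t.
by rewrite last_rcons heavy_v andbT; case: (t).
Qed.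

Lemma mem_hl_paths u s : hl_path A X u s -> s \in hl_paths A X u (last u s).
Proof.
move=> hl_s; have /and4P[_ As _ _] := hl_s.
by rewrite mem_filter hl_s eqxx (acyclic_path_all_seqs A_acyclic As).
Qed.

Lemma comp_sink_in v : is_sink (comp_arc A X) v -> v \in X.
Proof.
move=> comp_sink_v; apply/negPn/negP => v_notin_X.
have [s hl_s] := heavy_path_extends_to_hl_path (erefl : path A v [::]) erefl v_notin_X.
move/forallP/(_ (last v s)): comp_sink_v; rewrite negbK => /eqP no_hl.
by have := mem_hl_paths hl_s; rewrite no_hl.
Qed.

Definition hl_witness u w := if hl_paths A X u w is s :: _ then s else [::].

Lemma comp_arc_witness u w : comp_arc A X u w ->
  path A u (hl_witness u w) /\ last u (hl_witness u w) = w.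
Proof.
rewrite /comp_arc /hl_witness; case E: (hl_paths A X u w) => [|s l] // _.
have : s \in hl_paths A X u w by rewrite E mem_head.
by rewrite mem_filter => /andP[/andP[/and4P[_ -> _ _] /eqP ->] _].
Qed.

Lemma comp_theta_witness (R : realType) (theta : V -> V -> R) u w :
  comp_arc A X u w ->
  comp_theta A X theta u w = path_weight theta u (hl_witness u w).
Proof. by rewrite /comp_arc /comp_theta /hl_witness; case: (hl_paths A X u w). Qed.

Fixpoint decompress u s :=
  if s is w :: s' then hl_witness u w ++ decompress w s' else [::].

Lemma decompress_path u s :
  path (comp_arc A X) u s ->
  path A u (decompress u s) /\ last u (decompress u s) = last u s.
Proof.
elim: s u => [|w s IHs] u //= /andP[comp_uw comp_s].
have [Aw lastw] := comp_arc_witness comp_uw; have [As lasts] := IHs w comp_s.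
by rewrite cat_path last_cat lastw Aw As lasts.
Qed.

Lemma path_weight_decompress (R : realType) (theta : V -> V -> R) u s :
  path (comp_arc A X) u s ->
  path_weight theta u (decompress u s) = path_weight (comp_theta A X theta) u s.
Proof.
elim: s u => [|w s IHs] u /=; first by rewrite !path_weight_nil.
move=> /andP[comp_uw comp_s]; have [_ lastw] := comp_arc_witness comp_uw.
by rewrite path_weight_cat path_weight_cons lastw IHs // comp_theta_witness.
Qed.

Lemma decompress_root_sink_path r s :
  s \in root_sink_paths (comp_arc A X) r ->
  decompress r s \in root_sink_paths A r.
Proof.
rewrite !mem_filter => /andP[/andP[comp_s sink_s] _].
have [As lastE] := decompress_path comp_s.
rewrite As lastE (acyclic_path_all_seqs A_acyclic As) andbT.
exact/sinkE/comp_sink_in.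
Qed.

End Compression.

Theorem lemma3p15 (R : realType) (V : finType) (A : rel V) (X : {set V}) (r : V)
    (omega theta : V -> V -> R) :
  dag_over A X r ->
  marked A X omega theta ->
  info_depth (comp_arc A X) (comp_theta A X theta) r <= info_depth A theta r.
Proof.
move=> [A_acyclic _ sinkE] _.
rewrite {1}/info_depth big_seq.
apply: bigmax_le => [|s s_root_sink]; first exact: bigmax_ge_id.
have comp_s : path (comp_arc A X) r s.
  by move: s_root_sink; rewrite mem_filter => /andP[/andP[]].
rewrite -(path_weight_decompress theta comp_s).
apply: info_depth_ge.
exact: decompress_root_sink_path.
Qed.
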